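(* Let $k$ be a field and suppose $Y,Z$ are objects of $\mathcal S_2(k)$ of the same partition type $(\alpha,\beta,\gamma)$. (1) $\delta H(Y,Z)_X=0$ for $X=P_1^1$ and for $X=P_0^m$, $X=P_2^m$ for every $m\in\mathbb N$. (2) For every $r\ge1$, $\lim_{m\to\infty}\delta H(Y,Z)_{B_2^{m,r}}=\delta H(Y,Z)_{P_1^r}$.
   Context: For a partition $\alpha$ let $N_\alpha=\bigoplus_ik[T]/(T^{\alpha_i})$. $\mathcal S(k)$: objects are triples $(N_\alpha,N_\beta,f)$ with $f$ an injective $k[T]$-map; morphisms are pairs $(\psi_1,\psi_2)$ of $k[T]$-maps with $f'\psi_1=\psi_2f$. $\mathcal S_2(k)$: objects with $\alpha_1\le2$. Partition type $(\alpha,\beta,\gamma)$: $\operatorname{Coker}f\cong N_\gamma$. Pickets: $P_\ell^m=(N_{(\ell)},N_{(m)},\iota)$ for $0\le\ell\le\min\{2,m\}$, $\iota$ the inclusion of the unique $\ell$-dimensional $T$-invariant subspace. Bipickets: $B_2^{m,r}=(N_{(2)},N_{(m,r)},\delta)$ for $1\le r\le m-2$, with $\delta(1)=(T^{m-2},T^{r-1})$. For objects $X,Y,Z$ put $[X,Y]=\dim_k\operatorname{Hom}_{\mathcal S}(X,Y)$ and $\delta H(Y,Z)_X=[X,Z]-[X,Y]$. *)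

From HB Require Import structures.
From mathcomp Require Import all_boot all_order all_algebra.
Set Implicit Arguments. Unset Strict Implicit. Unset Printing Implicit Defensive.
Import GRing.Theory.
Local Open Scope ring_scope.

Definition is_partition (s : seq nat) : bool :=
  sorted geq s && all (fun x => (0 < x)%N) s.

(* N_alpha = (+)_i k[T]/(T^alpha_i) as the k-space k^(|alpha|) (column vectors),
   with basis T^p * 1_t (t-th summand, 0 <= p < alpha_t), ordered summand by
   summand; the action of T is the matrix Tmat alpha (nilpotent Jordan blocks). *)
Definition partial_sums (s : seq nat) : seq nat :=
  [seq sumn (take n s) | n <- iota 0 (size s).+1].

Definition Tmat (k : fieldType) (s : seq nat) : 'M[k]_(sumn s) :=
  \matrix_(i, j) ((i == (j : nat).+1 :> nat) && ((i : nat) \notin partial_sums s))%:R.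

Definition gen_elt (k : fieldType) (s : seq nat) (t p : nat) : 'cV[k]_(sumn s) :=
  Tmat k s ^+ p *m \col_i ((i : nat) == sumn (take t s) :> nat)%:R.

(* The k[T]-map N_(l) -> N_s sending the generator 1 to v (requires T^l v = 0):
   its j-th column is T^j v. *)
Definition from_gen (k : fieldType) (l : nat) (s : seq nat) (v : 'cV[k]_(sumn s))
  : 'M[k]_(sumn s, sumn [:: l]) :=
  \matrix_(i, j) ((Tmat k s ^+ j *m v) i ord0).

(* Objects (N_alpha, N_beta, f) of S(k); the data of a candidate triple. *)
Record sobj (k : fieldType) := SObj {
  sa : seq nat;
  sb : seq nat;
  smap : 'M[k]_(sumn sb, sumn sa) }.

Definition is_sobj (k : fieldType) (X : sobj k) : Prop :=
  [/\ is_partition (sa X), is_partition (sb X),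
      smap X *m Tmat k (sa X) = Tmat k (sb X) *m smap X
    & forall v : 'cV[k]_(sumn (sa X)), smap X *m v = 0 -> v = 0].

Definition is_sobj2 (k : fieldType) (X : sobj k) : Prop :=
  is_sobj X /\ all (fun a => (a <= 2)%N) (sa X).

(* Partition type (alpha, beta, gamma): Coker f = N_gamma, i.e. there is a
   surjective k[T]-map g : N_beta -> N_gamma with kernel Im f. *)
Definition has_ptype (k : fieldType) (X : sobj k) (al be ga : seq nat) : Prop :=
  [/\ sa X = al, sb X = be, is_partition ga &
   exists g : 'M[k]_(sumn ga, sumn (sb X)),
     [/\ g *m Tmat k (sb X) = Tmat k ga *m g,
         (forall w : 'cV[k]_(sumn ga), exists v, g *m v = w)
       & forall v : 'cV[k]_(sumn (sb X)),
           g *m v = 0 <-> exists u, v = smap X *m u]].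

(* Hom_S(X, Y): pairs (psi1, psi2) of k[T]-maps with f' psi1 = psi2 f; it is
   the kernel of the following k-linear map. *)
Definition hom_cond (k : fieldType) (X Y : sobj k)
  (p : 'M[k]_(sumn (sa Y), sumn (sa X)) * 'M[k]_(sumn (sb Y), sumn (sb X)))
  : 'M[k]_(sumn (sa Y), sumn (sa X)) * 'M[k]_(sumn (sb Y), sumn (sb X))
    * 'M[k]_(sumn (sb Y), sumn (sa X)) :=
  (p.1 *m Tmat k (sa X) - Tmat k (sa Y) *m p.1,
   p.2 *m Tmat k (sb X) - Tmat k (sb Y) *m p.2,
   smap Y *m p.1 - p.2 *m smap X).

Definition hom_space (k : fieldType) (X Y : sobj k) :=
  lker (linfun (@hom_cond k X Y)).

Definition homdim (k : fieldType) (X Y : sobj k) : nat := \dim (hom_space X Y).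

Definition deltaH (k : fieldType) (Y Z X : sobj k) : int :=
  (homdim X Z)%:Z - (homdim X Y)%:Z.

Definition part1 (l : nat) : seq nat := if l is 0 then [::] else [:: l].

(* Picket P_l^m = (N_(l), N_(m), iota), iota the inclusion of the unique
   l-dimensional T-invariant subspace T^(m-l) N_(m): 1 |-> T^(m-l). *)
Definition picket (k : fieldType) (l m : nat) : sobj k :=
  @SObj k (part1 l) (part1 m)
    (\matrix_(i, j) ((i : nat) == ((j : nat) + (m - l))%N :> nat)%:R).

(* Bipicket B_2^{m,r} = (N_(2), N_(m,r), delta), delta(1) = (T^(m-2), T^(r-1)). *)
Definition bipicket (k : fieldType) (m r : nat) : sobj k :=
  @SObj k [:: 2] [:: m; r]
    (from_gen 2 (gen_elt k [:: m; r] 0 (m - 2)%N + gen_elt k [:: m; r] 1 (r - 1)%N)).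

From HB Require Import structures.
From mathcomp Require Import all_boot all_order all_algebra zify.
Set Implicit Arguments. Unset Strict Implicit. Unset Printing Implicit Defensive.
Import GRing.Theory.
Local Open Scope ring_scope.

(* Pickets and bipickets are built from cyclic k[T]-modules, so a morphism out
   of them is determined by the images of the generators, and each Hom space is
   a space of vectors in N_alpha or N_beta.  [P_1^1, Y] = dim ker (T | N_alpha)
   and [P_0^m, Y] = dim Hom_k[T] (N_(m), N_beta) depend only on alpha, resp.
   beta.  For l >= 1, [P_l^m, Y] is the dimension of the space of y in N_beta
   with T^m y = 0 and T^(m-l) y in Im f; for l = 2 and alpha_1 <= 2 the first
   condition is automatic, and as Coker f = N_gamma the space T^-(m-2) (Im f)
   has dimension |beta| - rank (T^(m-2) | N_gamma).  Once m >= |beta| + 2,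
   T^(m-2) kills N_beta, so the first generator of B_2^{m,r} may go anywhere
   while the second satisfies exactly the conditions counted by [P_1^r, Y];
   thus [B_2^{m,r}, Y] = |beta| + [P_1^r, Y] and |beta| cancels. *)

Lemma partial_sums_cons a s :
  partial_sums (a :: s) = 0%N :: map (addn a) (partial_sums s).
Proof.
rewrite /partial_sums -[iota 0 _]/(0%N :: iota 1 (size s).+1) (iotaDl 1) map_cons.
by rewrite -!map_comp; congr (_ :: _); apply: eq_map.
Qed.

Lemma partial_sums1 m : partial_sums [:: m] = [:: 0%N; m].
Proof. by rewrite /partial_sums /= addn0. Qed.

Lemma partial_sums2 m r : partial_sums [:: m; r] = [:: 0%N; m; (m + r)%N].
Proof. by rewrite /partial_sums /= !addn0. Qed.

Lemma mem0_partial_sums s : 0%N \in partial_sums s.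
Proof. by case: s => [|a s]; rewrite ?partial_sums_cons ?inE. Qed.

Lemma partial_sums_le2 s : all (fun a => (a <= 2)%N) s ->
  forall d, (0 < d <= sumn s)%N ->
  (d \in partial_sums s) || (d.+1 \in partial_sums s).
Proof.
elim: s => [_ d /andP[d0 dn]|a s IH /andP[a2 s2] d /andP[d0 dn]].
  by move: (leq_trans d0 dn).
rewrite [sumn _]/= in dn; rewrite partial_sums_cons.
move: (partial_sums s) (mem0_partial_sums s) (IH s2) => P P0 {}IH.
have a_in : a \in 0%N :: map (addn a) P.
  by rewrite in_cons -[X in X \in _]addn0 map_f ?orbT.
have [lt_ad|le_da] := ltnP a d; last first.
  have /orP[/eqP-> | /eqP->] : (d == a) || (d.+1 == a) by lia.
    by apply/orP; left.
  by apply/orP; right.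
have -> : d = (a + (d - a))%N by lia.
rewrite -addnS !in_cons !(mem_map (@addnI a)).
by case/orP: (IH (d - a)%N ltac:(lia)) => ->; rewrite ?orbT.
Qed.

(* The c-th standard basis column, zero when c >= n; ecol _ (sumn (take t s))
   is the generator 1 of the t-th summand of N_s. *)
Definition ecol (k : fieldType) n c : 'cV[k]_n := \col_i ((i : nat) == c)%:R.
Arguments ecol k n c%_N.

Section Basis.
Variable k : fieldType.
Local Notation T := (Tmat k).

Lemma ecol_out n c : (n <= c)%N -> ecol k n c = 0.
Proof.
move=> le_nc; apply/matrixP=> i j; rewrite !mxE.
by case: eqP => // ei; move: (ltn_ord i); rewrite ei ltnNge le_nc.
Qed.

Lemma mulmx_ecol m n (A : 'M[k]_(m, n)) (j : 'I_n) : A *m ecol k n j = col j A.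
Proof.
rewrite colE; congr (_ *m _); apply/matrixP=> i l.
by rewrite !mxE (ord1 l) eqxx andbT.
Qed.

Lemma mx_ecolP m n (A B : 'M[k]_(m, n)) :
  (forall c, (c < n)%N -> A *m ecol k n c = B *m ecol k n c) -> A = B.
Proof.
move=> eqAB; apply/matrixP=> i j; have := eqAB j (ltn_ord j).
by rewrite !mulmx_ecol => /matrixP /(_ i ord0); rewrite !mxE.
Qed.

Lemma Tmat_ecol s c : T s *m ecol k (sumn s) c =
  if c.+1 \in partial_sums s then 0 else ecol k (sumn s) c.+1.
Proof.
have [lt_cs|le_sc] := ltnP c (sumn s); last first.
  by rewrite !ecol_out ?mulmx0 ?if_same // ltnW.
have -> : c = Ordinal lt_cs by []; rewrite mulmx_ecol; apply/matrixP=> i l.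
by rewrite !mxE; case: ifP => Sc; rewrite ?mxE; case: eqP => // ->; rewrite Sc.
Qed.

Lemma mulmx_expS n (A : 'M[k]_n) j m (x : 'M[k]_(n, m)) :
  A *m (A ^+ j *m x) = A ^+ j.+1 *m x.
Proof. by rewrite exprS -mulmxE mulmxA. Qed.

Lemma mulmx_exprD n (A : 'M[k]_n) i j : A ^+ i *m A ^+ j = A ^+ (i + j).
Proof. by rewrite exprD mulmxE. Qed.

Lemma Tmat_pow_ecol s p c :
  (T s ^+ p *m ecol k (sumn s) c = ecol k (sumn s) (c + p)%N) \/
  (T s ^+ p *m ecol k (sumn s) c = 0).
Proof.
elim: p => [|p [] IH]; first by left; rewrite expr0 mul1mx addn0.
- rewrite exprS -mulmxA IH Tmat_ecol addnS; case: ifP => _; by [right | left].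
- by right; rewrite exprS -mulmxA IH mulmx0.
Qed.

Lemma Tmat_pow_eq0 s p : (sumn s <= p)%N -> T s ^+ p = 0.
Proof.
move=> le_sp; apply: mx_ecolP => c _; rewrite mul0mx.
by case: (Tmat_pow_ecol s p c) => // ->; rewrite ecol_out // (leq_trans le_sp) ?leq_addl.
Qed.

Lemma Tmat_sqr_eq0 s : all (fun a => (a <= 2)%N) s -> T s ^+ 2 = 0.
Proof.
move=> s2; apply: mx_ecolP => c lt_cs; rewrite mul0mx expr2 -mulmxA Tmat_ecol.
case: ifP => [_|Sc]; first by rewrite mulmx0.
rewrite Tmat_ecol; case: ifP => // SSc.
have [lt_SSc|] := ltnP c.+2 (sumn s); last by move/ecol_out.
by have := partial_sums_le2 s2 (d := c.+1) lt_cs; rewrite Sc SSc.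
Qed.

Lemma ecol_cycle1 m j : (j < m)%N -> ecol k (sumn [:: m]) j = T [:: m] ^+ j *m ecol k _ 0.
Proof.
elim: j => [|j IH] lt_jm; first by rewrite expr0 mul1mx.
rewrite exprS -mulmxA -IH 1?ltnW // Tmat_ecol partial_sums1 !inE.
by rewrite (ltn_eqF lt_jm).
Qed.

Lemma ecol_cycle2l m r j : (j < m)%N ->
  ecol k (sumn [:: m; r]) j = T [:: m; r] ^+ j *m ecol k _ 0.
Proof.
elim: j => [|j IH] lt_jm; first by rewrite expr0 mul1mx.
rewrite exprS -mulmxA -IH 1?ltnW // Tmat_ecol partial_sums2 !inE.
by have -> : [|| j.+1 == 0, j.+1 == m | j.+1 == m + r]%N = false by lia.
Qed.

Lemma ecol_cycle2r m r j : (j < r)%N ->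
  ecol k (sumn [:: m; r]) (m + j)%N = T [:: m; r] ^+ j *m ecol k _ m.
Proof.
elim: j => [|j IH] lt_jr; first by rewrite expr0 mul1mx addn0.
rewrite exprS -mulmxA -IH 1?ltnW // Tmat_ecol partial_sums2 !inE addnS.
by have -> : [|| (m + j).+1 == 0, (m + j).+1 == m | (m + j).+1 == m + r]%N = false by lia.
Qed.

End Basis.

Section Intertwiners.
Variable k : fieldType.
Local Notation T := (Tmat k).

Lemma lfunE_linear (aT rT : vectType k) (f : aT -> rT) : linear f -> linfun f =1 f.
Proof.
move=> lin_f; exact: (lfunE (HB.pack f (GRing.isLinear.Build _ _ _ _ f lin_f))).
Qed.

Lemma intertwine_linear m n (A : 'M[k]_n) (B : 'M[k]_m) :
  linear (fun q : 'M[k]_(m, n) => q *m A - B *m q).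
Proof.
move=> a u v /=.
by rewrite !(mulmxDl, mulmxDr, scalerBr, =^~scalemxAl, =^~scalemxAr) opprD addrACA.
Qed.

Lemma hom_cond_linear (X Y : sobj k) : linear (@hom_cond k X Y).
Proof.
move=> a [u1 u2] [v1 v2]; rewrite /hom_cond.
by congr (_, _, _) => /=;
  rewrite !(mulmxDl, mulmxDr, scalerBr, =^~scalemxAl, =^~scalemxAr) opprD addrACA.
Qed.

Lemma hom_spaceP (X Y : sobj k) p : reflect
  [/\ p.1 *m T (sa X) = T (sa Y) *m p.1,
      p.2 *m T (sb X) = T (sb Y) *m p.2 &
      smap Y *m p.1 = p.2 *m smap X] (p \in hom_space X Y).
Proof.
rewrite memv_ker lfunE_linear; last exact: hom_cond_linear.
rewrite /hom_cond.
apply: (iffP eqP) => [[] | [-> -> ->]]; last by rewrite !subrr.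
by move=> /subr0_eq-> /subr0_eq-> /subr0_eq->.
Qed.

Lemma intertwineX m n (A : 'M[k]_(m, n)) (B : 'M[k]_n) (C : 'M[k]_m) j :
  A *m B = C *m A -> A *m B ^+ j = C ^+ j *m A.
Proof.
move=> AB; elim: j => [|j IH]; first by rewrite !expr0 mulmx1 mul1mx.
by rewrite !exprSr mulmxA IH -!mulmxA AB.
Qed.

Lemma from_gen_ecol l s (x : 'cV[k]_(sumn s)) c :
  (c < l)%N -> from_gen l x *m ecol k _ c = T s ^+ c *m x.
Proof.
move=> lt_cl; have lt_cl' : (c < sumn [:: l])%N by rewrite /= addn0.
have -> : c = Ordinal lt_cl' by [].
by rewrite mulmx_ecol; apply/matrixP => i j; rewrite !mxE (ord1 j).
Qed.

Lemma from_gen_ecol0 l s (x : 'cV[k]_(sumn s)) :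
  (0 < l)%N -> from_gen l x *m ecol k _ 0 = x.
Proof. by move/from_gen_ecol->; rewrite expr0 mul1mx. Qed.

Lemma from_gen0 l s : from_gen l (0 : 'cV[k]_(sumn s)) = 0.
Proof. by apply/matrixP => i j; rewrite [LHS]mxE mulmx0 !mxE. Qed.

Lemma mulmx_from_gen l s t (q : 'M[k]_(sumn s, sumn t)) (v : 'cV[k]_(sumn t)) :
  q *m T t = T s *m q -> q *m from_gen l v = from_gen l (q *m v).
Proof.
move=> qT; apply: mx_ecolP => c lt_cl; have {}lt_cl : (c < l)%N by rewrite /= addn0 in lt_cl.
by rewrite -mulmxA !from_gen_ecol // !mulmxA (intertwineX _ qT).
Qed.

Lemma from_genE m s (q : 'M[k]_(sumn s, sumn [:: m])) :
  q *m T [:: m] = T s *m q -> q = from_gen m (q *m ecol k _ 0).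
Proof.
move=> qT; apply: mx_ecolP => c lt_cm; have {}lt_cm : (c < m)%N by rewrite /= addn0 in lt_cm.
by rewrite from_gen_ecol // ecol_cycle1 // mulmxA (intertwineX _ qT) mulmxA.
Qed.

Lemma intertwine_gen_nilp m s (q : 'M[k]_(sumn s, sumn [:: m])) :
  q *m T [:: m] = T s *m q -> T s ^+ m *m (q *m ecol k _ 0) = 0.
Proof.
have Tm0 : T [:: m] ^+ m = 0 by apply: Tmat_pow_eq0; rewrite /= addn0.
by move=> qT; rewrite mulmxA -(intertwineX _ qT) Tm0 mulmx0 mul0mx.
Qed.

Lemma from_gen_intertwine m s (x : 'cV[k]_(sumn s)) :
  T s ^+ m *m x = 0 -> from_gen m x *m T [:: m] = T s *m from_gen m x.
Proof.
move=> Tx; apply: mx_ecolP => c lt_cm; have {}lt_cm : (c < m)%N by rewrite /= addn0 in lt_cm.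
rewrite -!mulmxA Tmat_ecol partial_sums1 !inE from_gen_ecol // mulmx_expS.
have [lt_Scm|] := ltnP c.+1 m; first by rewrite (ltn_eqF lt_Scm) orbF /= from_gen_ecol.
move=> le_mSc; have -> : c.+1 = m by lia.
by rewrite eqxx orbT mulmx0 Tx.
Qed.

Definition from_gen2 m r s (x y : 'cV[k]_(sumn s)) : 'M[k]_(sumn s, sumn [:: m; r]) :=
  \matrix_(i, j) (if (j < m)%N then (T s ^+ j *m x) i 0 else (T s ^+ (j - m) *m y) i 0).

Lemma from_gen2_ecol m r s (x y : 'cV[k]_(sumn s)) c : (c < m + r)%N ->
  from_gen2 m r x y *m ecol k _ c =
  if (c < m)%N then T s ^+ c *m x else T s ^+ (c - m) *m y.
Proof.
move=> lt_cmr; have lt_cmr' : (c < sumn [:: m; r])%N by rewrite /= addn0.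
have -> : c = Ordinal lt_cmr' by [].
by rewrite mulmx_ecol; apply/matrixP => i j; rewrite (ord1 j) !mxE /=; case: ifP; rewrite mxE.
Qed.

Lemma from_gen2_ecoll m r s (x y : 'cV[k]_(sumn s)) c : (c < m)%N ->
  from_gen2 m r x y *m ecol k _ c = T s ^+ c *m x.
Proof. by move=> lt_cm; rewrite from_gen2_ecol ?lt_cm ?ltn_addr. Qed.

Lemma from_gen2_ecolr m r s (x y : 'cV[k]_(sumn s)) c : (m <= c < m + r)%N ->
  from_gen2 m r x y *m ecol k _ c = T s ^+ (c - m) *m y.
Proof. by case/andP=> le_mc lt_cmr; rewrite from_gen2_ecol // ltnNge le_mc. Qed.

Lemma from_gen2_intertwine m r s (x y : 'cV[k]_(sumn s)) :
  T s ^+ m *m x = 0 -> T s ^+ r *m y = 0 ->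
  from_gen2 m r x y *m T [:: m; r] = T s *m from_gen2 m r x y.
Proof.
move=> Tx Ty; apply: mx_ecolP => c lt_cmr.
have {}lt_cmr : (c < m + r)%N by rewrite /= addn0 in lt_cmr.
rewrite -!mulmxA Tmat_ecol partial_sums2 !inE.
have [lt_cm|le_mc] := ltnP c m.
  rewrite from_gen2_ecoll // mulmx_expS.
  have [lt_Scm|le_mSc] := ltnP c.+1 m.
    have -> : [|| c.+1 == 0, c.+1 == m | c.+1 == m + r]%N = false by lia.
    by rewrite from_gen2_ecoll.
  have -> : c.+1 = m by lia.
  by rewrite eqxx orbT mulmx0 Tx.
rewrite from_gen2_ecolr ?le_mc // mulmx_expS.
have [lt_Scmr|le_mrSc] := ltnP c.+1 (m + r).
  have -> : [|| c.+1 == 0, c.+1 == m | c.+1 == m + r]%N = false by lia.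
  by rewrite from_gen2_ecolr -?subSn //; lia.
have -> : [|| c.+1 == 0, c.+1 == m | c.+1 == m + r]%N by lia.
have -> : (c - m).+1 = r by lia.
by rewrite Ty mulmx0.
Qed.

Lemma from_gen2E m r s (q : 'M[k]_(sumn s, sumn [:: m; r])) :
  q *m T [:: m; r] = T s *m q -> q = from_gen2 m r (q *m ecol k _ 0) (q *m ecol k _ m).
Proof.
move=> qT; apply: mx_ecolP => c lt_cmr.
have {}lt_cmr : (c < m + r)%N by rewrite /= addn0 in lt_cmr.
have [lt_cm|le_mc] := ltnP c m.
  by rewrite from_gen2_ecoll // ecol_cycle2l // mulmxA (intertwineX _ qT) mulmxA.
rewrite from_gen2_ecolr ?le_mc // -{1}(subnKC le_mc) ecol_cycle2r; last by lia.
by rewrite mulmxA (intertwineX _ qT) mulmxA.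
Qed.

Lemma from_gen2_0 m r s : from_gen2 m r (0 : 'cV[k]_(sumn s)) 0 = 0.
Proof. by apply/matrixP => i j; rewrite [LHS]mxE !mulmx0 if_same !mxE. Qed.

End Intertwiners.

Section Subspaces.
Variable k : fieldType.

Definition colspace m n (A : 'M[k]_(m, n)) : {vspace 'cV[k]_m} :=
  limg (linfun (@mulmx k m n 1 A)).

Definition nullspace m n (A : 'M[k]_(m, n)) : {vspace 'cV[k]_n} :=
  lker (linfun (@mulmx k m n 1 A)).

Definition preim_mx m n (A : 'M[k]_(m, n)) (U : {vspace 'cV[k]_m}) : {vspace 'cV[k]_n} :=
  (linfun (@mulmx k m n 1 A) @^-1: U)%VS.

Lemma colspaceP m n (A : 'M[k]_(m, n)) y :
  reflect (exists u, y = A *m u) (y \in colspace A).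
Proof.
apply: (iffP memv_imgP) => [[u _ ->] | [u ->]]; first by exists u; rewrite lfunE.
by exists u; rewrite ?memvf ?lfunE.
Qed.

Lemma mem_colspace m n (A : 'M[k]_(m, n)) u : A *m u \in colspace A.
Proof. by apply/colspaceP; exists u. Qed.

Lemma mem_nullspace m n (A : 'M[k]_(m, n)) v : (v \in nullspace A) = (A *m v == 0).
Proof. by rewrite memv_ker lfunE. Qed.

Lemma mem_preim_mx m n (A : 'M[k]_(m, n)) U v : (v \in preim_mx A U) = (A *m v \in U).
Proof. by rewrite -memv_preim lfunE. Qed.

Lemma dim_cV n : \dim (fullv : {vspace 'cV[k]_n}) = n.
Proof. by rewrite dimvf dim_matrix; exact: muln1. Qed.

Lemma dim_linfun_inj (aT rT : vectType k) (U : {vspace aT}) (f : aT -> rT) :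
  linear f -> {in U, forall u, f u = 0 -> u = 0} -> \dim (linfun f @: U) = \dim U.
Proof.
move=> lin_f f_inj; apply/limg_dim_eq/eqP; rewrite -subv0; apply/subvP => u.
rewrite memv_cap memv_ker lfunE_linear // memv0 => /andP[Uu /eqP fu0].
by rewrite (f_inj u Uu fu0).
Qed.

Lemma limg_linfun_eq (aT rT : vectType k) (U : {vspace aT}) (W : {vspace rT})
    (f : aT -> rT) : linear f ->
  {in U, forall u, f u \in W} -> {in W, forall w, exists2 u, u \in U & f u = w} ->
  (linfun f @: U)%VS = W.
Proof.
move=> lin_f fUW fWU; apply/vspaceP => w; apply/memv_imgP/idP.
  by case=> u Uu ->; rewrite lfunE_linear // fUW.
by case/fWU=> u Uu <-; exists u; rewrite ?lfunE_linear.
Qed.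

(* If g : N_beta -> N_gamma is onto with kernel Im F and intertwines T, then
   g maps Im T^j onto Im T_gamma^j with kernel Im F :&: Im T^j; rank-nullity for
   T^j restricted to T^-j (Im F) gives the formula. *)
Lemma dim_preim_coker b a c (F : 'M[k]_(b, a)) (TB : 'M[k]_b) (g : 'M[k]_(c, b))
    (TG : 'M[k]_c) j :
  g *m TB = TG *m g -> colspace g = fullv -> nullspace g = colspace F ->
  (\dim (preim_mx (TB ^+ j) (colspace F)) + \dim (colspace (TG ^+ j)) = b)%N.
Proof.
move=> gT g_onto g_ker.
set Tj := linfun (@mulmx k b b 1 (TB ^+ j)); set G := linfun (@mulmx k c b 1 g).
have dim_full : (\dim (lker Tj) + \dim (limg Tj) = b)%N.
  by rewrite -[in RHS](dim_cV b) -(limg_ker_dim Tj fullv) capfv.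
have dim_preim : \dim (preim_mx (TB ^+ j) (colspace F)) =
                 (\dim (lker Tj) + \dim (colspace F :&: limg Tj))%N.
  rewrite -(limg_ker_dim Tj (preim_mx _ _)) /preim_mx -/Tj.
  have -> : (Tj @^-1: colspace F :&: lker Tj)%VS = lker Tj.
    by apply/capv_idPr; rewrite -lpreim0 lpreimS ?sub0v.
  by rewrite -lpreim_cap_limg lpreimK // capvSr.
have dim_im : (\dim (colspace F :&: limg Tj) + \dim (colspace (TG ^+ j)) = \dim (limg Tj))%N.
  rewrite -(limg_ker_dim G (limg Tj)) capvC -g_ker; congr (_ + _)%N.
  have GTj : (G \o Tj = linfun (@mulmx k c c 1 (TG ^+ j)) \o G)%VF.
    by apply/lfunP => v; rewrite !comp_lfunE !lfunE /= !mulmxA (intertwineX j gT).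
  by rewrite -limg_comp GTj limg_comp -/(colspace g) g_onto.
by rewrite dim_preim -addnA dim_im dim_full.
Qed.

End Subspaces.

(* By homdim_picket, the space of images of 1 in N_beta under the morphisms
   P_l^m -> Y. *)
Definition picket_gens (k : fieldType) (Y : sobj k) l m : {vspace 'cV[k]_(sumn (sb Y))} :=
  (nullspace (Tmat k (sb Y) ^+ m)
   :&: preim_mx (Tmat k (sb Y) ^+ (m - l)) (colspace (smap Y)))%VS.

Section Pickets.
Variable k : fieldType.
Local Notation T := (Tmat k).

Lemma smap_inj_mx (Y : sobj k) n (M : 'M[k]_(sumn (sa Y), n)) :
  is_sobj Y -> smap Y *m M = 0 -> M = 0.
Proof.
case=> _ _ _ f_inj fM0; apply: mx_ecolP => c _; rewrite mul0mx; apply: f_inj.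
by rewrite mulmxA fM0 mul0mx.
Qed.

Lemma picket_smapE l m : (l <= m)%N ->
  smap (picket k l.+1 m.+1) = from_gen l.+1 (T [:: m.+1] ^+ (m - l) *m ecol k _ 0).
Proof.
move=> le_lm; apply: (@mx_ecolP _ (sumn [:: m.+1]) (sumn [:: l.+1])) => c lt_cl.
have lt_cl' : (c < l.+1)%N by rewrite /= addn0 in lt_cl.
rewrite from_gen_ecol // mulmxA mulmx_exprD -ecol_cycle1; last lia.
have -> : c = Ordinal lt_cl by [].
by rewrite mulmx_ecol; apply/matrixP => i j; rewrite (ord1 j) !mxE addnC.
Qed.

Lemma homdim_picket11 (Y : sobj k) :
  is_sobj Y -> homdim (picket k 1 1) Y = \dim (nullspace (T (sa Y))).
Proof.
move=> Yobj; have [_ _ fT _] := Yobj.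
have iota1 : smap (picket k 1 1) = 1%:M.
  by apply/matrixP => i j; rewrite (ord1 i) (ord1 j) !mxE.
have T1 : T (part1 1) = 0 by apply/matrixP => i j; rewrite (ord1 i) (ord1 j) !mxE.
rewrite /homdim -(@dim_linfun_inj _ _ _ _ (fun p => p.1)) //; last first.
  move=> p /hom_spaceP[_ _ fp] p10; move: fp; rewrite iota1 mulmx1 p10 mulmx0.
  by case: p p10 => ? ? /= -> <-.
congr (\dim _); apply: limg_linfun_eq => // [p /hom_spaceP[pT _ _] | w].
  by rewrite mem_nullspace -pT T1 mulmx0.
rewrite mem_nullspace => /eqP Tw; exists (w, smap Y *m w) => //.
apply/(@hom_spaceP _ (picket k 1 1) Y); split.
- by rewrite T1 mulmx0 Tw.
- by rewrite T1 mulmx0 mulmxA -fT -mulmxA Tw mulmx0.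
- by rewrite iota1 mulmx1.
Qed.

Definition intertwiners m n (A : 'M[k]_n) (B : 'M[k]_m) : {vspace 'M[k]_(m, n)} :=
  lker (linfun (fun q : 'M[k]_(m, n) => q *m A - B *m q)).

Lemma homdim_picket0 (Y : sobj k) m :
  homdim (picket k 0 m) Y = \dim (intertwiners (T (part1 m)) (T (sb Y))).
Proof.
rewrite /homdim -(@dim_linfun_inj _ _ _ _ (fun p => p.2)) //; last first.
  by move=> [p1 p2] _ /= ->; rewrite [p1]thinmx0.
congr (\dim _); apply: limg_linfun_eq => // [p /hom_spaceP[_ pT _] | w].
  rewrite memv_ker lfunE_linear; last exact: intertwine_linear.
  by apply/eqP; rewrite -[T (part1 m)]/(T (sb (picket k 0 m))) pT subrr.
rewrite memv_ker lfunE_linear; last exact: intertwine_linear.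
move=> /eqP/subr0_eq wT; exists (0, w) => //.
by apply/(@hom_spaceP _ (picket k 0 m) Y); split; rewrite ?[LHS]thinmx0 ?[RHS]thinmx0.
Qed.

Lemma mem_picket_gens (Y : sobj k) l m y : (y \in picket_gens Y l m) =
  (T (sb Y) ^+ m *m y == 0) && (T (sb Y) ^+ (m - l) *m y \in colspace (smap Y)).
Proof. by rewrite memv_cap mem_nullspace mem_preim_mx. Qed.

(* Given the image y of 1 in N_beta, the image a of 1 in N_alpha is forced by
   f a = T^(m-l) y, and T^l a = 0 holds automatically because f is injective. *)
Lemma picket_gens_lift (Y : sobj k) l m y : is_sobj Y -> (l <= m)%N ->
  y \in picket_gens Y l m ->
  exists2 a, T (sa Y) ^+ l *m a = 0 & T (sb Y) ^+ (m - l) *m y = smap Y *m a.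
Proof.
move=> Yobj le_lm; have [_ _ fT f_inj] := Yobj.
rewrite mem_picket_gens => /andP[/eqP Tmy /colspaceP[a fa]]; exists a => //.
apply: f_inj; rewrite mulmxA (intertwineX _ fT) -mulmxA -fa mulmxA mulmx_exprD.
by rewrite addnC subnK // mulmx0.
Qed.

Lemma hom_picket_inj (Y : sobj k) l m p : is_sobj Y ->
  p \in hom_space (picket k l m.+1) Y -> p.2 *m ecol k _ 0 = 0 -> p = 0.
Proof.
move=> Yobj /hom_spaceP[_ pT fp] p0.
have p2 : p.2 = 0 by rewrite (from_genE pT) p0 from_gen0.
move: fp; rewrite p2 mul0mx => /(smap_inj_mx Yobj) p1.
by case: p p1 p2 {pT p0} => /= ? ? -> ->.
Qed.

Lemma homdim_picket (Y : sobj k) l m : is_sobj Y -> (l < m)%N ->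
  homdim (picket k l.+1 m) Y = \dim (picket_gens Y l.+1 m).
Proof.
move=> Yobj; have [_ _ fT _] := Yobj; case: m => // m lt_lm.
have smapE := @picket_smapE l m lt_lm.
have smap0 : smap (picket k l.+1 m.+1) *m ecol k _ 0 = T [:: m.+1] ^+ (m - l) *m ecol k _ 0.
  by rewrite smapE from_gen_ecol0.
rewrite /homdim -(@dim_linfun_inj _ _ _ _ (fun p => p.2 *m ecol k _ 0)); first last.
- by move=> p; apply: hom_picket_inj.
- by move=> a u v; rewrite mulmxDl -scalemxAl.
congr (\dim _); apply: limg_linfun_eq => [a u v | p /hom_spaceP[_ pT fp] | y Wy].
- by rewrite mulmxDl -scalemxAl.
- rewrite mem_picket_gens (intertwine_gen_nilp pT) eqxx /=.
  rewrite mulmxA -(intertwineX _ pT) -mulmxA -smap0.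
  by rewrite mulmxA -fp -mulmxA mem_colspace.
- have [a Ta fa] := picket_gens_lift Yobj lt_lm Wy.
  have Tmy : T (sb Y) ^+ m.+1 *m y = 0 by move: Wy; rewrite mem_picket_gens => /andP[/eqP].
  exists (from_gen l.+1 a, from_gen m.+1 y); last exact: from_gen_ecol0.
  apply/(@hom_spaceP _ (picket k l.+1 m.+1) Y); split; try exact: from_gen_intertwine.
  rewrite (mulmx_from_gen _ _ fT) smapE (mulmx_from_gen _ _ (from_gen_intertwine Tmy)).
  by rewrite mulmxA (intertwineX _ (from_gen_intertwine Tmy)) -mulmxA from_gen_ecol0 // fa.
Qed.

Lemma picket_gens2 (Y : sobj k) m : is_sobj2 Y -> (2 <= m)%N ->
  picket_gens Y 2 m = preim_mx (T (sb Y) ^+ (m - 2)) (colspace (smap Y)).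
Proof.
move=> [Yobj a_le2] le2m; have [_ _ fT _] := Yobj.
apply/vspaceP => y; rewrite mem_picket_gens mem_preim_mx andb_idl // => /colspaceP[a fa].
rewrite -(subnKC le2m) exprD -mulmxA fa mulmxA -(intertwineX _ fT) -mulmxA.
by rewrite (Tmat_sqr_eq0 k a_le2) mul0mx mulmx0.
Qed.

Lemma has_ptype_coker (Y : sobj k) al be ga : has_ptype Y al be ga ->
  exists g : 'M[k]_(sumn ga, sumn (sb Y)),
    [/\ g *m T (sb Y) = T ga *m g, colspace g = fullv & nullspace g = colspace (smap Y)].
Proof.
case=> _ _ _ [g [gT g_onto g_ker]]; exists g; split => //.
  apply/vspaceP => w; rewrite memvf; have [v <-] := g_onto w; exact: mem_colspace.
apply/vspaceP => v; rewrite mem_nullspace.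
by apply/eqP/colspaceP => /g_ker.
Qed.

Lemma homdim_picket2 (Y : sobj k) al be ga m : is_sobj2 Y -> has_ptype Y al be ga ->
  (2 <= m)%N ->
  (homdim (picket k 2 m) Y + \dim (colspace (T ga ^+ (m - 2))) = sumn (sb Y))%N.
Proof.
move=> Yobj2 Ytype le2m; have [g [gT g_onto g_ker]] := has_ptype_coker Ytype.
rewrite (homdim_picket (proj1 Yobj2) le2m) (picket_gens2 Yobj2 le2m).
exact: dim_preim_coker gT g_onto g_ker.
Qed.

End Pickets.

Definition hom_eval (k : fieldType) (X Y : sobj k) (c : nat) :=
  linfun (fun p : 'M[k]_(sumn (sa Y), sumn (sa X)) * 'M[k]_(sumn (sb Y), sumn (sb X)) =>
    p.2 *m ecol k _ c).

Section Bipickets.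
Variable k : fieldType.
Local Notation T := (Tmat k).

Lemma hom_evalE (X Y : sobj k) c p : hom_eval X Y c p = p.2 *m ecol k _ c.
Proof. by rewrite lfunE_linear // => a u v; rewrite mulmxDl -scalemxAl. Qed.

Lemma bipicket_smapE m r : smap (bipicket k m r) =
  from_gen 2 (T [:: m; r] ^+ (m - 2) *m ecol k _ 0 + T [:: m; r] ^+ (r - 1) *m ecol k _ m).
Proof.
congr (from_gen 2 (_ *m _ + _ *m _)).
by apply/matrixP => -[i lt_i] j; rewrite !mxE /= addn0.
Qed.

Lemma intertwine_bipicket_smap s m r (q : 'M[k]_(sumn s, sumn [:: m; r])) :
  q *m T [:: m; r] = T s *m q -> q *m smap (bipicket k m r) =
  from_gen 2 (T s ^+ (m - 2) *m (q *m ecol k _ 0) + T s ^+ (r - 1) *m (q *m ecol k _ m)).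
Proof.
move=> qT; rewrite bipicket_smapE (mulmx_from_gen _ _ qT) mulmxDr !mulmxA.
by rewrite !(intertwineX _ qT) -!mulmxA.
Qed.

(* Since T^(m-2) kills N_beta, the first generator of N_(m,r) can be sent
   anywhere, the second one to 0. *)
Lemma limg_hom_eval0_bipicket (Y : sobj k) m r : (1 <= r)%N -> (sumn (sb Y) + 2 <= m)%N ->
  (hom_eval (bipicket k m r) Y 0 @: hom_space (bipicket k m r) Y)%VS = fullv.
Proof.
move=> le1r lem; apply/vspaceP => x; rewrite memvf; apply/memv_imgP.
have Tm0 : T (sb Y) ^+ m = 0 by apply: Tmat_pow_eq0; lia.
have Tm20 : T (sb Y) ^+ (m - 2) = 0 by apply: Tmat_pow_eq0; lia.
have qT : from_gen2 m r x 0 *m T [:: m; r] = T (sb Y) *m from_gen2 m r x 0.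
  by apply: from_gen2_intertwine; rewrite ?Tm0 ?mul0mx ?mulmx0.
exists (0, from_gen2 m r x 0); last first.
  by rewrite hom_evalE from_gen2_ecoll ?expr0 ?mul1mx //; lia.
apply/(@hom_spaceP _ (bipicket k m r) Y); split => //=; first by rewrite mul0mx mulmx0.
have qm : from_gen2 m r x 0 *m ecol k _ m = 0 by rewrite from_gen2_ecolr ?mulmx0 //; lia.
by rewrite mulmx0 (intertwine_bipicket_smap qT) Tm20 mul0mx add0r qm mulmx0 from_gen0.
Qed.

Lemma dim_hom_bipicket_ker (Y : sobj k) m r : is_sobj Y -> (1 <= r)%N -> (2 <= m)%N ->
  \dim (hom_space (bipicket k m r) Y :&: lker (hom_eval (bipicket k m r) Y 0))
  = \dim (picket_gens Y 1 r).
Proof.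
move=> Yobj le1r le2m; have [_ _ fT _] := Yobj.
rewrite -(@dim_linfun_inj _ _ _ _ (fun p => p.2 *m ecol k _ m)); first last.
- move=> p; rewrite memv_cap memv_ker hom_evalE => /andP[/hom_spaceP[_ pT fp] /eqP p0] pm.
  have p2 : p.2 = 0 by rewrite (from_gen2E pT) p0 pm from_gen2_0.
  move: fp; rewrite p2 mul0mx => /(smap_inj_mx Yobj) p1.
  by case: p p1 p2 {pT p0 pm} => /= ? ? -> ->.
- by move=> a u v; rewrite mulmxDl -scalemxAl.
congr (\dim _); apply: limg_linfun_eq => [a u v | p | y Wy].
- by rewrite mulmxDl -scalemxAl.
- rewrite memv_cap memv_ker hom_evalE => /andP[/hom_spaceP[_ pT fp] /eqP p0].
  rewrite mem_picket_gens; apply/andP; split.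
    rewrite mulmxA -(intertwineX _ pT) -mulmxA.
    case: (Tmat_pow_ecol k [:: m; r] r m) => ->; last by rewrite mulmx0.
    by rewrite ecol_out ?mulmx0 //= addn0.
  have := congr1 (mulmx^~ (ecol k _ 0)) (intertwine_bipicket_smap pT).
  rewrite from_gen_ecol0 // p0 mulmx0 add0r => <-.
  by rewrite -fp -mulmxA mem_colspace.
- have [a Ta fa] := picket_gens_lift Yobj le1r Wy.
  have Tmy : T (sb Y) ^+ r *m y = 0 by move: Wy; rewrite mem_picket_gens => /andP[/eqP].
  have qT : from_gen2 m r 0 y *m T [:: m; r] = T (sb Y) *m from_gen2 m r 0 y.
    by apply: from_gen2_intertwine; rewrite ?mulmx0.
  have q0 : from_gen2 m r 0 y *m ecol k _ 0 = 0.
    by rewrite from_gen2_ecoll ?mulmx0 //; lia.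
  have qm : from_gen2 m r 0 y *m ecol k _ m = y.
    by rewrite from_gen2_ecolr ?subnn ?expr0 ?mul1mx //; lia.
  exists (from_gen 2 a, from_gen2 m r 0 y); last exact: qm.
  rewrite memv_cap memv_ker hom_evalE q0 eqxx andbT.
  apply/(@hom_spaceP _ (bipicket k m r) Y); split.
  + by apply: from_gen_intertwine; rewrite -mulmx_expS Ta mulmx0.
  + exact: qT.
  + by rewrite (mulmx_from_gen _ _ fT) (intertwine_bipicket_smap qT) q0 qm mulmx0 add0r fa.
Qed.

Lemma homdim_bipicket (Y : sobj k) m r : is_sobj Y -> (1 <= r)%N ->
  (sumn (sb Y) + 2 <= m)%N ->
  homdim (bipicket k m r) Y = (sumn (sb Y) + \dim (picket_gens Y 1 r))%N.
Proof.
move=> Yobj le1r lem; have le2m : (2 <= m)%N by lia.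
rewrite /homdim -(limg_ker_dim (hom_eval (bipicket k m r) Y 0)).
rewrite limg_hom_eval0_bipicket // dim_cV addnC.
by rewrite dim_hom_bipicket_ker.
Qed.

End Bipickets.

Theorem lemma4p2 (k : fieldType) (Y Z : sobj k) (al be ga : seq nat) :
  is_sobj2 Y -> is_sobj2 Z -> has_ptype Y al be ga -> has_ptype Z al be ga ->
  (deltaH Y Z (picket k 1 1) = 0%R
   /\ (forall m : nat, deltaH Y Z (picket k 0 m) = 0%R)
   /\ (forall m : nat, (2 <= m)%N -> deltaH Y Z (picket k 2 m) = 0%R))
  /\ (forall r : nat, (1 <= r)%N ->
        exists M : nat, forall m : nat, (M <= m)%N ->
          deltaH Y Z (bipicket k m r) = deltaH Y Z (picket k 1 r)).
Proof.
move=> Y2 Z2 Ytype Ztype; have [Ya Yb _ _] := Ytype; have [Za Zb _ _] := Ztype.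
have [[Yobj _] [Zobj _]] := (Y2, Z2).
split; first split; [|split|].
- by rewrite /deltaH !homdim_picket11 // Ya Za subrr.
- by move=> m; rewrite /deltaH !homdim_picket0 Yb Zb subrr.
- move=> m le2m; rewrite /deltaH.
  have := homdim_picket2 Y2 Ytype le2m; have := homdim_picket2 Z2 Ztype le2m.
  by rewrite Yb Zb => <- /addIn ->; rewrite subrr.
- move=> r le1r; exists (sumn be + 2)%N => m lem.
  rewrite /deltaH (homdim_bipicket Yobj le1r) ?Yb // (homdim_bipicket Zobj le1r) ?Zb //.
  rewrite (homdim_picket Yobj le1r) (homdim_picket Zobj le1r) !PoszD opprD addrACA.
  have -> : (sumn (sb Z))%:Z - (sumn (sb Y))%:Z = 0 by rewrite Yb Zb subrr.
  by rewrite add0r.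
Qed.
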